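(* Let $m\ge 2$ be an even integer and $k$ an integer with $\gcd(k,m)=1$. Let $\alpha\in\mathbb{F}_{2^m}$ be nonzero and not a cube in $\mathbb{F}_{2^m}$, and let $i$ be an even nonnegative integer. Then the function $f:\mathbb{F}_{2^m}^2\to\mathbb{F}_{2^m}^2$ (identified additively with $\mathbb{F}_{2^{2m}}$) given by $$f(x,y)=\big(x^{2^k+1}+\alpha\, y^{(2^k+1)2^i},\ xy\big)$$ is APN.
   Context: A function $f$ on $\mathbb{F}_{2^{2m}}$ is almost perfect nonlinear (APN) if for every $a\neq 0$ and every $b$ the equation $f(x+a)-f(x)=b$ has at most two solutions. *)

From HB Require Import structures.
From mathcomp Require Import all_boot all_order all_algebra.
Set Implicit Arguments. Unset Strict Implicit. Unset Printing Implicit Defensive.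
Import GRing.Theory.
Local Open Scope ring_scope.

Definition APN2 (F : finFieldType) (g : F * F -> F * F) : Prop :=
  forall a b : F * F, a != 0 ->
    (#|[set x : F * F | (g (x + a) - g x == b)%R]| <= 2)%N.

Definition is_cube (F : fieldType) (alpha : F) : Prop :=
  exists z : F, z ^+ 3 = alpha.

Definition fcor4 (F : finFieldType) (k i : nat) (alpha : F) (p : F * F) : F * F :=
  (p.1 ^+ (2 ^ k + 1) + alpha * p.2 ^+ ((2 ^ k + 1) * 2 ^ i), p.1 * p.2).

(** The function [f] is quadratic over [F_2], so its second difference
    [f (x + z + a) + f (x + z) + f (x + a) + f x = B(z, a)] is a bilinear
    form independent of [x]; hence [f (x + a) - f x = b] has at most two
    solutions as soon as the kernel of [B(-, a)] is [{0, a}] for [a <> 0].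
    The second coordinate [x y] of [f] forces a kernel element [(z, w)] onto
    the line [t (a, b)].  On that line the first coordinate becomes
    [a^(2^k+1) u + alpha (b^(2^k+1) u)^(2^i)] with [u = t^(2^k) + t]: since
    [k] is odd and [i] even, [3] divides [2^k + 1] and [2^i - 1], so for
    [u <> 0] this would make [alpha] a cube.  Thus [u = 0], and [gcd(k, m) = 1]
    gives [t \in {0, 1}]. *)

From HB Require Import structures.
From mathcomp Require Import all_boot all_order all_algebra all_field ring.
Set Implicit Arguments.
Unset Strict Implicit.
Unset Printing Implicit Defensive.
Import GRing.Theory.
Local Open Scope ring_scope.

(* [F * F] has both a finite and an additive structure; this declares their join. *)
HB.saturate prod.

Lemma card_derivative_le2 (V : finZmodType) (g : V -> V) (a b : V) :
  (forall x z, g (x + z + a) - g (x + z) = g (x + a) - g x -> z = 0 \/ z = a) ->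
  (#|[set x | (g (x + a) - g x == b)%R]| <= 2)%N.
Proof.
move=> kerg; set S := [set x | _].
have [-> | [x0 Sx0]] := set_0Vmem S; first by rewrite cards0.
suff sub : S \subset [set x0; x0 + a].
  by rewrite (leq_trans (subset_leq_card sub)) // cards2; case: (_ != _).
apply/subsetP => x; rewrite !inE => /eqP gx; move: Sx0; rewrite inE => /eqP gx0.
have := kerg x0 (x - x0); rewrite (addrC x0) subrK gx gx0 => /(_ erefl).
case=> [/eqP | xa]; first by rewrite subr_eq0 => /eqP->; rewrite eqxx.
by rewrite -xa (addrC x0) subrK eqxx orbT.
Qed.

Definition gold_form (R : pzRingType) (k : nat) (z a : R) : R :=
  z ^+ (2 ^ k) * a + z * a ^+ (2 ^ k).

Lemma gold_form_line (R : comPzRingType) k (a t : R) :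
  gold_form k (a * t) a = a ^+ (2 ^ k + 1) * (t ^+ (2 ^ k) + t).
Proof. by rewrite /gold_form exprMn exprD expr1; ring. Qed.

Lemma is_cube_ratio (F : fieldType) (alpha x y : F) :
  y != 0 -> x ^+ 3 + alpha * y ^+ 3 = 0 -> is_cube alpha.
Proof.
move=> y_neq0 /eqP; rewrite addr_eq0 => /eqP xy.
exists (- x / y); rewrite expr_div_n.
have -> : (- x) ^+ 3 = - x ^+ 3 by ring.
by rewrite xy opprK mulfK // expf_neq0.
Qed.

Lemma cube_exprM (R : pzRingType) (x : R) e : (3 %| e)%N -> exists c, x ^+ e = c ^+ 3.
Proof. by case/dvdnP=> c ->; exists (x ^+ c); rewrite exprM. Qed.

Section Char2.

Variable F : fieldType.
Hypothesis ch2 : 2 \in [pchar F].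

Lemma exprD_pow2 n (x y : F) : (x + y) ^+ (2 ^ n) = x ^+ (2 ^ n) + y ^+ (2 ^ n).
Proof. by apply: exprDn_pchar; rewrite (eq_pnat _ (pcharf_eq ch2)) pnatX pnat_id. Qed.

Lemma pchar2_subr_eq (e1 e2 e3 e4 : F) : e1 - e2 = e3 - e4 -> e1 + e2 + e3 + e4 = 0.
Proof. by rewrite !(oppr_pchar2 ch2) => ->; rewrite -addrA (addrr_pchar2 ch2). Qed.

Lemma gold_second_diff k (x z a : F) :
  (x + z + a) ^+ (2 ^ k + 1) + (x + z) ^+ (2 ^ k + 1) + (x + a) ^+ (2 ^ k + 1)
  + x ^+ (2 ^ k + 1) = gold_form k z a.
Proof.
rewrite /gold_form !exprD !expr1 !exprD_pow2.
move: (x ^+ (2 ^ k)) (z ^+ (2 ^ k)) (a ^+ (2 ^ k)) => X Z A.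
rewrite -[RHS]addr0 -(addrr_pchar2 ch2
  (X * x + X * x + X * z + X * a + Z * x + Z * z + A * x + A * a)).
ring.
Qed.

Lemma mul_second_diff (x z a y w b : F) :
  (x + z + a) * (y + w + b) + (x + z) * (y + w) + (x + a) * (y + b) + x * y
  = z * b + a * w.
Proof.
rewrite -[RHS]addr0 -(addrr_pchar2 ch2
  (x * y + x * y + x * w + x * b + z * y + z * w + a * y + a * b)).
ring.
Qed.

Lemma kernel_mul_line (a b z w : F) : (a != 0) || (b != 0) ->
  z * b + a * w = 0 -> exists t, z = a * t /\ w = b * t.
Proof.
move=> ab_neq0 /eqP; rewrite addr_eq0 (oppr_pchar2 ch2) => /eqP zb.
have [b0 | b_neq0] := eqVneq b 0.
  move: ab_neq0 zb; rewrite b0 eqxx orbF mulr0 => a_neq0 /esym/eqP.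
  rewrite mulf_eq0 (negbTE a_neq0) => /eqP->.
  by exists (z / a); rewrite mulrCA divff // mulr1 mul0r.
exists (w / b); split; last by rewrite mulrCA divff // mulr1.
by rewrite mulrA -zb mulfK.
Qed.

Section Kernel.

Variables (k i : nat) (alpha : F).
Hypothesis fixed01 : forall t : F, t ^+ (2 ^ k) = t -> t = 0 \/ t = 1.
Hypothesis dvd3_k : (3 %| 2 ^ k + 1)%N.
Hypothesis dvd3_i : (3 %| 2 ^ i - 1)%N.
Hypothesis alpha_ncube : ~ is_cube alpha.

Lemma gold_line_neq0 (a b u : F) : (a != 0) || (b != 0) -> u != 0 ->
  a ^+ (2 ^ k + 1) * u + alpha * (b ^+ (2 ^ k + 1) * u) ^+ (2 ^ i) != 0.
Proof.
move=> ab_neq0 u_neq0; have [b0 | b_neq0] := eqVneq b 0.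
  move: ab_neq0; rewrite b0 eqxx orbF => a_neq0.
  rewrite expr0n addn1 /= mul0r expr0n expn_eq0 /= mulr0 addr0.
  by rewrite mulf_neq0 ?expf_neq0.
apply/eqP => eq0; apply: alpha_ncube.
have [A eA] := cube_exprM a dvd3_k.
have [B eB] := cube_exprM b (dvdn_mulr (2 ^ i) dvd3_k).
have [C eC] := cube_exprM u dvd3_i.
have u2i : u ^+ (2 ^ i) = u * u ^+ (2 ^ i - 1).
  by rewrite -exprS subn1 prednK ?expn_gt0.
have BC_neq0 : B * C != 0.
  have : (B * C) ^+ 3 != 0 by rewrite exprMn -eB -eC mulf_neq0 ?expf_neq0.
  by apply: contraNneq => ->; rewrite expr0n.
apply: (is_cube_ratio (x := A) BC_neq0).
have : u * (A ^+ 3 + alpha * (B * C) ^+ 3) = 0.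
  by rewrite -[RHS]eq0 !exprMn -exprM u2i -eA -eB -eC; ring.
by move/eqP; rewrite mulf_eq0 (negbTE u_neq0) /= => /eqP.
Qed.

Lemma gold_kernel (a b z w : F) : (a != 0) || (b != 0) ->
  z * b + a * w = 0 ->
  gold_form k z a + alpha * gold_form k w b ^+ (2 ^ i) = 0 ->
  (z = 0 /\ w = 0) \/ (z = a /\ w = b).
Proof.
move=> ab_neq0 /(kernel_mul_line ab_neq0)[t [-> ->]].
rewrite !gold_form_line; have [u0 _ | u_neq0] := eqVneq (t ^+ (2 ^ k) + t) 0.
  move/eqP: u0; rewrite addr_eq0 (oppr_pchar2 ch2) => /eqP/fixed01[]->.
    by left; rewrite !mulr0.
  by right; rewrite !mulr1.
by move/eqP; rewrite (negbTE (gold_line_neq0 ab_neq0 u_neq0)).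
Qed.

End Kernel.

End Char2.

Section Fcor4Derivative.

Variables (F : finFieldType) (k i : nat) (alpha : F).
Hypothesis ch2 : 2 \in [pchar F].
Hypothesis fixed01 : forall t : F, t ^+ (2 ^ k) = t -> t = 0 \/ t = 1.
Hypothesis dvd3_k : (3 %| 2 ^ k + 1)%N.
Hypothesis dvd3_i : (3 %| 2 ^ i - 1)%N.
Hypothesis alpha_ncube : ~ is_cube alpha.

Lemma fcor4_kernel (x z a : F * F) : a != 0 ->
  fcor4 k i alpha (x + z + a) - fcor4 k i alpha (x + z)
    = fcor4 k i alpha (x + a) - fcor4 k i alpha x ->
  z = 0 \/ z = a.
Proof.
case: x z a => [x y] [z w] [a b] ab_neq0 eqdiff.
have /= E1 := pchar2_subr_eq ch2 (congr1 fst eqdiff).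
have /= E2 := pchar2_subr_eq ch2 (congr1 snd eqdiff).
rewrite (mul_second_diff ch2) in E2.
have E1' : gold_form k z a + alpha * gold_form k w b ^+ (2 ^ i) = 0.
  rewrite -[RHS]E1 !exprM -(gold_second_diff ch2 k x) -(gold_second_diff ch2 k y).
  by rewrite !(exprD_pow2 ch2); ring.
have ab_neq0' : (a != 0) || (b != 0) by rewrite -negb_and -xpair_eqE.
by case: (gold_kernel ch2 fixed01 dvd3_k dvd3_i alpha_ncube ab_neq0' E2 E1') =>
  [[-> ->]|[-> ->]]; [left | right].
Qed.

End Fcor4Derivative.

Lemma expr_pow_fixed (R : pzRingType) (t : R) N j : t ^+ N = t -> t ^+ (N ^ j) = t.
Proof. by move=> tN; elim: j => [|j IH]; rewrite ?expr1 // expnSr exprM IH tN. Qed.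

Lemma fixed_exp2_coprime (F : finFieldType) m k (t : F) :
  #|F| = (2 ^ m)%N -> coprime k m -> (0 < k)%N -> t ^+ (2 ^ k) = t -> t = 0 \/ t = 1.
Proof.
move=> cardF cop_km k_gt0 tk.
have [a _ /dvdnP [c]] := Bezoutl m k_gt0; rewrite (eqP cop_km) => Bez.
have tm : (t ^+ 2) ^+ (2 ^ m) = t ^+ 2 by rewrite -cardF expf_card.
have t2 : t ^+ 2 = t.
  rewrite -[t in RHS](expr_pow_fixed c tk) -expnM mulnC -Bez.
  by rewrite expnD expn1 exprM mulnC expnM (expr_pow_fixed _ tm).
have /eqP : t * (t - 1) = 0 by rewrite mulrBr mulr1 -expr2 t2 subrr.
by rewrite mulf_eq0 subr_eq0 => /orP[]/eqP; [left | right].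
Qed.

Lemma expn4_mod3 j : (4 ^ j = 1 %[mod 3])%N.
Proof. by rewrite -modnXm exp1n. Qed.

Lemma dvdn3_exp2_odd k : odd k -> (3 %| 2 ^ k + 1)%N.
Proof.
move=> k_odd; rewrite -(odd_double_half k) k_odd -muln2 mulnC expnD expnM.
by rewrite /dvdn -modnDml -modnMmr expn4_mod3.
Qed.

Lemma dvdn3_exp2_even i : ~~ odd i -> (3 %| 2 ^ i - 1)%N.
Proof.
move=> i_even; rewrite -(odd_double_half i) (negbTE i_even) -muln2 mulnC expnM.
by rewrite -eqn_mod_dvd ?expn_gt0 ?expn4_mod3.
Qed.

Theorem corollary4 (F : finFieldType) (m k i : nat) (alpha : F) :
  #|F| = (2 ^ m)%N -> (2 <= m)%N -> ~~ odd m -> coprime k m ->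
  alpha != 0 -> ~ is_cube alpha -> ~~ odd i ->
  APN2 (fcor4 k i alpha).
Proof.
(* [alpha != 0] is redundant: [0] is a cube. *)
move=> cardF m_ge2 m_even cop_km _ alpha_ncube i_even a b a_neq0.
have ch2 : 2 \in [pchar F] := card_finPcharP cardF isT.
have k_gt0 : (0 < k)%N.
  by move: cop_km; case: k => //; rewrite /coprime gcd0n => /eqP m1; rewrite m1 in m_ge2.
have k_odd : odd k.
  apply: contraT => k_even.
  have : (2 %| gcdn k m)%N by rewrite dvdn_gcd !dvdn2 k_even m_even.
  by rewrite (eqP cop_km).
apply: card_derivative_le2 => x z.
apply: (fcor4_kernel ch2 _ (dvdn3_exp2_odd k_odd) (dvdn3_exp2_even i_even)
  alpha_ncube a_neq0).
by move=> t; apply: fixed_exp2_coprime cardF cop_km k_gt0.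
Qed.
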